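(* Let $\sigma_w^2=0$. Then $(\alpha,\sigma^2)=(1,0)$ is a fixed point of the real SE map. Let $\delta_{\mathrm{global}}:=1+\frac{4}{\pi^2}$. If $\delta>\delta_{\mathrm{global}}$, there exist $\epsilon_1>0,\epsilon_2>0$ such that for all $\alpha_0\in(1-\epsilon_1,1)$ and $\sigma_0^2\in(0,\epsilon_2)$ the real SE sequences satisfy $\alpha_t\to1$, $\sigma_t^2\to0$. If $\delta<\delta_{\mathrm{global}}$, the real SE sequences cannot converge to $(1,0)$ unless $(\alpha_0,\sigma_0^2)=(1,0)$.
   Context: Real state evolution. Fix $\delta>0$, $\sigma_w^2\ge0$. For $\alpha\in\mathbb{R}$, $\sigma^2\ge0$, $(\alpha,\sigma^2)\ne(0,0)$, with $\sigma=\sqrt{\sigma^2}$ and the convention $\arctan(\alpha/0)=\frac\pi2\,\mathrm{sign}(\alpha)$, define $$\psi_1(\alpha,\sigma^2)=\frac2\pi\arctan\Big(\frac\alpha\sigma\Big),\qquad \psi_2(\alpha,\sigma^2;\delta,\sigma_w^2)=\frac1\delta\Big[\alpha^2+\sigma^2+1-\frac{4\sigma}{\pi}-\frac{4\alpha}{\pi}\arctan\Big(\frac\alpha\sigma\Big)\Big]+\sigma_w^2 .$$ The real SE sequences are $\alpha_{t+1}=\psi_1(\alpha_t,\sigma_t^2)$, $\sigma_{t+1}^2=\psi_2(\alpha_t,\sigma_t^2;\delta,\sigma_w^2)$, $t\ge0$. *)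

From Stdlib Require Import Reals.
Open Scope R_scope.

Definition sgn (x : R) : R :=
  if Rlt_dec 0 x then 1 else if Rlt_dec x 0 then -1 else 0.

Definition arctan_ratio (alpha sigma : R) : R :=
  if Req_EM_T sigma 0 then PI / 2 * sgn alpha else atan (alpha / sigma).

Definition psi1 (alpha s2 : R) : R :=
  2 / PI * arctan_ratio alpha (sqrt s2).

Definition psi2 (alpha s2 delta sw2 : R) : R :=
  / delta * (alpha ^ 2 + s2 + 1 - 4 * sqrt s2 / PI
             - 4 * alpha / PI * arctan_ratio alpha (sqrt s2)) + sw2.

Fixpoint SE (delta sw2 alpha0 s0 : R) (t : nat) : R * R :=
  match t with
  | O => (alpha0, s0)
  | S t' => let p := SE delta sw2 alpha0 s0 t' in
            (psi1 (fst p) (snd p), psi2 (fst p) (snd p) delta sw2)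
  end.

Definition delta_global : R := 1 + 4 / PI ^ 2.

From Stdlib Require Import Reals Lra Psatz Lia.
Open Scope R_scope.

(* In the variables u = (1 - alpha)^2 and sigma^2 the SE map linearises at (1, 0)
   to (u, sigma^2) |-> (4/pi^2 sigma^2, (u + sigma^2) / delta), whose Perron root
   lam solves delta lam^2 = lam + 4/pi^2; it satisfies lam < 1 exactly when
   delta > delta_global.  The weighted energy V = (1 - alpha)^2 + lam delta sigma^2
   satisfies V' = lam V under the linearisation, so near (1, 0) one SE step multiplies
   V by a factor between (1 - e) lam and (1 + e) lam.  Above delta_global this makes
   V decay geometrically; below it V grows geometrically, so an orbit converging to
   (1, 0) must hit (1, 0) exactly, and (1, 0) has no preimage but itself. *)

Lemma PI_gt_3 : 3 < PI.
Proof. pose proof PI2_3_2; lra. Qed.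

Lemma four_div_PI_le_2 : 4 / PI <= 2.
Proof.
  pose proof PI_gt_3. apply Rmult_le_reg_r with PI; [lra|].
  unfold Rdiv; rewrite Rmult_assoc, Rinv_l; lra.
Qed.

Lemma arctan_ratio_0_l (s : R) : arctan_ratio 0 s = 0.
Proof.
  unfold arctan_ratio, sgn. destruct (Req_EM_T s 0).
  - destruct (Rlt_dec 0 0); [lra|]. destruct (Rlt_dec 0 0); lra.
  - unfold Rdiv; rewrite Rmult_0_l. apply atan_0.
Qed.

Lemma arctan_ratio_opp (a s : R) : arctan_ratio (- a) s = - arctan_ratio a s.
Proof.
  unfold arctan_ratio, sgn. destruct (Req_EM_T s 0).
  - destruct (Rlt_dec 0 (- a)), (Rlt_dec 0 a); try lra;
      destruct (Rlt_dec (- a) 0), (Rlt_dec a 0); lra.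
  - unfold Rdiv; rewrite Ropp_mult_distr_l_reverse. apply atan_opp.
Qed.

Lemma arctan_ratio_pos (a y : R) : 0 < a -> 0 <= y ->
  arctan_ratio a (a * y) = PI / 2 - atan y.
Proof.
  intros Ha Hy. unfold arctan_ratio, sgn.
  destruct (Req_EM_T (a * y) 0) as [Hay|Hay].
  - replace y with 0 by nra. rewrite atan_0.
    destruct (Rlt_dec 0 a); lra.
  - assert (y <> 0) by (intros ->; apply Hay; ring).
    replace (a / (a * y)) with (/ y) by (field; lra).
    apply atan_inv; lra.
Qed.

Lemma atan_bounds (y : R) : 0 <= y -> y <= atan y * (1 + y ^ 2) /\ atan y <= y.
Proof.
  intros Hy. destruct (Req_dec y 0) as [->|Hy0].
  { rewrite atan_0. lra. }
  destruct (MVT_cor2 atan (fun c => / (1 + c ^ 2)) 0 y) as [c [Hmvt Hc]].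
  - lra.
  - intros c _. apply derivable_pt_lim_atan.
  - rewrite atan_0, Rminus_0_r, Rminus_0_r in Hmvt. rewrite Hmvt.
    assert (Hinv : / (1 + c ^ 2) * (1 + c ^ 2) = 1) by (apply Rinv_l; nra).
    assert (Hinv_pos : 0 < / (1 + c ^ 2)) by (apply Rinv_0_lt_compat; nra).
    assert (Hcy : 1 + c ^ 2 <= 1 + y ^ 2) by nra.
    split.
    + assert (/ (1 + c ^ 2) * (1 + c ^ 2) <= / (1 + c ^ 2) * (1 + y ^ 2))
        by (apply Rmult_le_compat_l; lra).
      nra.
    + assert (/ (1 + c ^ 2) <= 1) by nra. nra.
Qed.

Lemma atan_defect_le_cube (y : R) : 0 <= y -> 0 <= y - atan y <= y ^ 3.
Proof. intros Hy. destruct (atan_bounds y Hy). nra. Qed.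

Lemma atan_ge_div_sqrt (y : R) : 0 <= y -> y / sqrt (1 + y ^ 2) <= atan y.
Proof.
  intros Hy. replace (y ^ 2) with (Rsqr y) by (unfold Rsqr; ring).
  rewrite <- sin_atan. destruct (Req_dec y 0) as [->|Hy0].
  - rewrite atan_0, sin_0. lra.
  - left. apply sin_lt_x. rewrite <- atan_0. apply atan_increasing. lra.
Qed.

(* Writing sigma = alpha y turns arctan (alpha / sigma) into pi/2 - atan y. *)
Lemma nonneg_eq_scaled_sqr (a s : R) : 0 < a -> 0 <= s ->
  exists y, 0 <= y /\ s = (a * y) ^ 2.
Proof.
  intros Ha Hs. exists (sqrt s / a). split.
  - apply Rmult_le_pos; [apply sqrt_pos|]. left; apply Rinv_0_lt_compat; lra.
  - replace (a * (sqrt s / a)) with (sqrt s) by (field; lra).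
    now rewrite pow2_sqrt.
Qed.

Lemma psi1_scaled (a y : R) : 0 < a -> 0 <= y ->
  psi1 a ((a * y) ^ 2) = 1 - 2 / PI * atan y.
Proof.
  intros Ha Hy. pose proof PI_gt_3. unfold psi1.
  rewrite sqrt_pow2 by nra. rewrite arctan_ratio_pos by lra. field; lra.
Qed.

Lemma psi2_scaled (a y d : R) : 0 < a -> 0 <= y -> 0 < d ->
  d * psi2 a ((a * y) ^ 2) d 0 = (1 - a) ^ 2 + (a * y) ^ 2 - 4 / PI * a * (y - atan y).
Proof.
  intros Ha Hy Hd. pose proof PI_gt_3. unfold psi2.
  rewrite sqrt_pow2 by nra. rewrite arctan_ratio_pos by lra. field; lra.
Qed.

Lemma psi2_defect_le (a y : R) : 0 <= a -> 0 <= y ->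
  4 / PI * a * (y - atan y) <= (1 - a) ^ 2 + (a * y) ^ 2.
Proof.
  intros Ha Hy. pose proof four_div_PI_le_2 as H4. pose proof PI_gt_3.
  assert (H4pos : 0 < 4 / PI) by (apply Rdiv_lt_0_compat; lra).
  destruct (atan_bounds y Hy) as [_ Hatan_le].
  pose proof (atan_ge_div_sqrt y Hy) as Hatan_ge.
  set (q := sqrt (1 + y ^ 2)) in *.
  assert (Hq2 : q * q = 1 + y ^ 2) by (unfold q; apply sqrt_sqrt; nra).
  assert (Hq0 : 0 <= q) by apply sqrt_pos.
  assert (Hq1 : 1 <= q) by nra.
  assert (Hq_atan : y <= q * atan y).
  { replace y with (q * (y / q)) at 1 by (field; lra).
    apply Rmult_le_compat_l; lra. }
  (* y - atan y <= y (q - 1) / q <= q - 1, and (1 - a)^2 + (a y)^2 - 2 a (q - 1) = (a q - 1)^2 *)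
  assert (Hy_le_q : y <= q) by nra.
  assert (Hdefect : y - atan y <= q - 1).
  { apply Rmult_le_reg_l with q; [lra|]. nra. }
  assert (4 / PI * a * (y - atan y) <= 2 * a * (q - 1)).
  { apply Rle_trans with (2 * a * (y - atan y)); [|nra].
    apply Rmult_le_compat_r; [lra|]. apply Rmult_le_compat_r; lra. }
  pose proof (pow2_ge_0 (a * q - 1)). nra.
Qed.

Lemma psi2_defect_le_small (a y e : R) : 0 <= a -> 0 <= y -> 2 * y <= e * a ->
  4 / PI * a * (y - atan y) <= e * (a * y) ^ 2.
Proof.
  intros Ha Hy Hya. pose proof four_div_PI_le_2. pose proof PI_gt_3.
  pose proof (atan_defect_le_cube y Hy) as Hcubic.
  apply Rle_trans with (2 * a * (y - atan y)).
  - apply Rmult_le_compat_r; [lra|]. apply Rmult_le_compat_r; lra.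
  - apply Rle_trans with (2 * y * (a * y ^ 2)).
    + replace (2 * y * (a * y ^ 2)) with (2 * a * y ^ 3) by ring. nra.
    + replace (e * (a * y) ^ 2) with (e * a * (a * y ^ 2)) by ring.
      apply Rmult_le_compat_r; [|lra]. pose proof (pow2_ge_0 y). nra.
Qed.

Lemma psi2_even (a s d w : R) : psi2 (- a) s d w = psi2 a s d w.
Proof. unfold psi2. rewrite arctan_ratio_opp. unfold Rdiv. ring. Qed.

Lemma psi2_nonneg (a s d : R) : 0 <= s -> 0 < d -> 0 <= psi2 a s d 0.
Proof.
  intros Hs Hd.
  assert (Hpos : forall b, 0 < b -> 0 <= psi2 b s d 0).
  { intros b Hb. destruct (nonneg_eq_scaled_sqr b s Hb Hs) as [y [Hy ->]].
    apply Rmult_le_reg_l with d; [lra|].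
    rewrite Rmult_0_r, psi2_scaled by lra.
    pose proof (psi2_defect_le b y); lra. }
  destruct (Rtotal_order a 0) as [Hneg|[->|Hapos]].
  - rewrite <- (Ropp_involutive a), psi2_even. apply Hpos; lra.
  - unfold psi2. rewrite arctan_ratio_0_l.
    pose proof four_div_PI_le_2 as H4. pose proof PI_gt_3.
    assert (Hsq : s = sqrt s ^ 2) by now rewrite pow2_sqrt.
    assert (4 * sqrt s / PI <= 2 * sqrt s).
    { unfold Rdiv. rewrite Rmult_assoc, (Rmult_comm (sqrt s)), <- Rmult_assoc.
      apply Rmult_le_compat_r; [apply sqrt_pos|exact H4]. }
    pose proof (pow2_ge_0 (sqrt s - 1)).
    apply Rplus_le_le_0_compat; [|lra].
    apply Rmult_le_pos; [left; apply Rinv_0_lt_compat; lra|].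
    replace (4 * 0 / PI * 0) with 0 by (field; lra). nra.
  - auto.
Qed.

Lemma psi_fixed_point (d : R) : psi1 1 0 = 1 /\ psi2 1 0 d 0 = 0.
Proof.
  pose proof PI_gt_3.
  unfold psi1, psi2, arctan_ratio, sgn. rewrite sqrt_0.
  destruct (Req_EM_T 0 0); [|lra]. destruct (Rlt_dec 0 1); [|lra].
  split; [field; lra|].
  replace (1 ^ 2 + 0 + 1 - 4 * 0 / PI - 4 * 1 / PI * (PI / 2 * 1)) with 0 by (field; lra).
  ring.
Qed.

Lemma psi_preimage_fixed_point (a s d : R) : 0 <= s -> 0 < d ->
  psi1 a s = 1 -> psi2 a s d 0 = 0 -> a = 1 /\ s = 0.
Proof.
  intros Hs Hd H1 H2. pose proof PI_gt_3.
  assert (Har : arctan_ratio a (sqrt s) = PI / 2).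
  { unfold psi1 in H1. apply Rmult_eq_reg_l with (2 / PI).
    - rewrite H1. field; lra.
    - apply Rgt_not_eq, Rdiv_lt_0_compat; lra. }
  assert (Hsq : sqrt s = 0).
  { unfold arctan_ratio in Har. destruct (Req_EM_T (sqrt s) 0); auto.
    pose proof (atan_bound (a / sqrt s)). lra. }
  assert (Hs0 : s = 0) by (apply sqrt_eq_0; auto).
  split; [|exact Hs0].
  unfold psi2 in H2. rewrite Har, Hsq, Hs0 in H2.
  replace (a ^ 2 + 0 + 1 - 4 * 0 / PI - 4 * a / PI * (PI / 2)) with ((a - 1) ^ 2)
    in H2 by (field; lra).
  rewrite Rplus_0_r in H2.
  apply Rmult_integral in H2 as [H2|H2].
  - apply Rinv_neq_0_compat in H2; lra.
  - nra.
Qed.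

Lemma lyapunov_rate_exists (d : R) : 0 < d ->
  exists lam, 0 < lam /\ d * lam ^ 2 = lam + 4 / PI ^ 2 /\
    (d > delta_global -> lam < 1) /\ (d < delta_global -> 1 < lam).
Proof.
  intros Hd. pose proof PI_gt_3. unfold delta_global.
  set (k := 4 / PI ^ 2).
  assert (Hk : 0 < k) by (apply Rdiv_lt_0_compat; nra).
  set (r := sqrt (1 + 4 * k * d)).
  assert (Hr2 : r * r = 1 + 4 * k * d) by (apply sqrt_sqrt; nra).
  assert (Hr0 : 0 <= r) by apply sqrt_pos.
  exists ((1 + r) / (2 * d)).
  assert (Hlam : 2 * d * ((1 + r) / (2 * d)) = 1 + r) by (field; lra).
  set (lam := (1 + r) / (2 * d)) in *.
  repeat split.
  - apply Rdiv_lt_0_compat; lra.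
  - apply Rmult_eq_reg_l with (4 * d); [|lra].
    replace (4 * d * (d * lam ^ 2)) with ((2 * d * lam) ^ 2) by ring.
    replace (4 * d * (lam + k)) with (2 * (2 * d * lam) + 4 * k * d) by ring.
    rewrite Hlam. nra.
  - intros Hgt. fold k in Hgt. assert (1 + r < 2 * d) by nra. nra.
  - intros Hlt. fold k in Hlt.
    assert (2 * d < 1 + r) by (destruct (Rlt_or_le (2 * d - 1) 0); nra). nra.
Qed.

Lemma SE_snd_nonneg (d a0 s0 : R) (t : nat) : 0 < d -> 0 <= s0 ->
  0 <= snd (SE d 0 a0 s0 t).
Proof. intros Hd Hs. induction t; [exact Hs|]. now apply psi2_nonneg. Qed.

Lemma SE_eq_fixed_point (d a0 s0 : R) (n : nat) : 0 < d -> 0 <= s0 ->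
  SE d 0 a0 s0 n = (1, 0) -> a0 = 1 /\ s0 = 0.
Proof.
  intros Hd Hs0. induction n as [|n IHn]; simpl.
  - now intros [= -> ->].
  - intros [= H1 H2]. apply IHn.
    destruct (SE d 0 a0 s0 n) as [a s] eqn:Hn.
    pose proof (SE_snd_nonneg d a0 s0 n Hd Hs0) as Hs. rewrite Hn in Hs.
    destruct (psi_preimage_fixed_point a s d Hs Hd H1 H2) as [-> ->]. reflexivity.
Qed.

Definition lyap (c a s : R) : R := (1 - a) ^ 2 + c * s.

Section Lyapunov.

Variables d lam : R.
Hypothesis d_pos : 0 < d.
Hypothesis lam_pos : 0 < lam.
Hypothesis lam_root : d * lam ^ 2 = lam + 4 / PI ^ 2.

Lemma lyap_step_le (e a s : R) : 0 < e -> 0 < a -> 0 <= s -> 1 <= (1 + e) * a ^ 2 ->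
  lyap (lam * d) (psi1 a s) (psi2 a s d 0) <= (1 + e) * lam * lyap (lam * d) a s.
Proof.
  intros He Ha Hs Hae. pose proof PI_gt_3.
  destruct (nonneg_eq_scaled_sqr a s Ha Hs) as [y [Hy ->]].
  unfold lyap. rewrite psi1_scaled by lra.
  pose proof (psi2_scaled a y d Ha Hy d_pos) as Hpsi2.
  pose proof (atan_defect_le_cube y Hy) as Hdefect.
  destruct (atan_bounds y Hy) as [Hatan_ge Hatan_le].
  assert (Hatan0 : 0 <= atan y) by nra.
  set (k := 4 / PI ^ 2) in *.
  assert (Hk : 0 < k) by (apply Rdiv_lt_0_compat; nra).
  assert (Halpha : (1 - (1 - 2 / PI * atan y)) ^ 2 = k * atan y ^ 2) by (unfold k; field; lra).
  assert (Hsigma : lam * d * psi2 a ((a * y) ^ 2) d 0 <= lam * ((1 - a) ^ 2 + (a * y) ^ 2)).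
  { rewrite Rmult_assoc, (Rmult_comm d). apply Rmult_le_compat_l; [lra|].
    assert (0 <= 4 / PI * a * (y - atan y)).
    { apply Rmult_le_pos; [apply Rmult_le_pos; [left; apply Rdiv_lt_0_compat|]|]; lra. }
    lra. }
  assert (Hatan_sq : k * atan y ^ 2 <= (1 + e) * k * (a * y) ^ 2).
  { assert (atan y ^ 2 <= y ^ 2) by nra.
    replace ((1 + e) * k * (a * y) ^ 2) with (k * ((1 + e) * a ^ 2 * y ^ 2)) by ring.
    apply Rmult_le_compat_l; [lra|]. pose proof (pow2_ge_0 y). nra. }
  replace ((1 + e) * lam * ((1 - a) ^ 2 + lam * d * (a * y) ^ 2))
    with ((1 + e) * lam * (1 - a) ^ 2 + (1 + e) * (lam + k) * (a * y) ^ 2)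
    by (rewrite <- lam_root; ring).
  assert (0 <= e * lam * (1 - a) ^ 2) by (apply Rmult_le_pos; [nra|apply pow2_ge_0]).
  assert (0 <= e * lam * (a * y) ^ 2) by (apply Rmult_le_pos; [nra|apply pow2_ge_0]).
  lra.
Qed.

Lemma lyap_step_ge (e a s : R) : 0 < e < 1 -> 1 / 2 <= a <= 1 + e / 8 -> 0 <= s ->
  sqrt s <= e / 16 ->
  (1 - e) * lam * lyap (lam * d) a s <= lyap (lam * d) (psi1 a s) (psi2 a s d 0).
Proof.
  intros He Ha Hs Hsq. pose proof PI_gt_3.
  destruct (nonneg_eq_scaled_sqr a s ltac:(lra) Hs) as [y [Hy ->]].
  rewrite sqrt_pow2 in Hsq by nra.
  assert (Hy_small : y <= e / 8) by nra.
  assert (Hcurv : (1 - e) * a ^ 2 * (1 + y ^ 2) ^ 2 <= 1).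
  { assert (a * (1 + y ^ 2) <= 1 + e / 4) by nra.
    assert (0 <= a * (1 + y ^ 2)) by nra. nra. }
  unfold lyap. rewrite psi1_scaled by lra.
  pose proof (psi2_scaled a y d ltac:(lra) Hy d_pos) as Hpsi2.
  pose proof (psi2_defect_le_small a y e ltac:(lra) Hy ltac:(nra)) as Hdefect.
  destruct (atan_bounds y Hy) as [Hatan_ge _].
  set (k := 4 / PI ^ 2) in *.
  assert (Hk : 0 < k) by (apply Rdiv_lt_0_compat; nra).
  assert (Halpha : (1 - (1 - 2 / PI * atan y)) ^ 2 = k * atan y ^ 2) by (unfold k; field; lra).
  assert (Hatan_sq : (1 - e) * (a * y) ^ 2 <= atan y ^ 2).
  { apply Rmult_le_reg_r with ((1 + y ^ 2) ^ 2); [nra|].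
    apply Rle_trans with (y ^ 2).
    - replace ((1 - e) * (a * y) ^ 2 * (1 + y ^ 2) ^ 2)
        with ((1 - e) * a ^ 2 * (1 + y ^ 2) ^ 2 * y ^ 2) by ring.
      pose proof (pow2_ge_0 y). nra.
    - replace (atan y ^ 2 * (1 + y ^ 2) ^ 2) with ((atan y * (1 + y ^ 2)) ^ 2) by ring.
      nra. }
  assert (Hsigma : lam * ((1 - a) ^ 2 + (1 - e) * (a * y) ^ 2)
                   <= lam * d * psi2 a ((a * y) ^ 2) d 0).
  { rewrite Rmult_assoc, (Rmult_comm d). apply Rmult_le_compat_l; lra. }
  replace ((1 - e) * lam * ((1 - a) ^ 2 + lam * d * (a * y) ^ 2))
    with ((1 - e) * lam * (1 - a) ^ 2 + (1 - e) * (lam + k) * (a * y) ^ 2)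
    by (rewrite <- lam_root; ring).
  assert (k * ((1 - e) * (a * y) ^ 2) <= k * atan y ^ 2) by (apply Rmult_le_compat_l; lra).
  assert (0 <= e * lam * (1 - a) ^ 2) by (apply Rmult_le_pos; [nra|apply pow2_ge_0]).
  lra.
Qed.

Lemma SE_lyap_decay (e r a0 s0 : R) : 0 < e -> 0 < r < 1 -> 1 <= (1 + e) * (1 - r) ^ 2 ->
  (1 + e) * lam <= 1 -> 0 <= s0 -> lyap (lam * d) a0 s0 <= r ^ 2 ->
  forall t, lyap (lam * d) (fst (SE d 0 a0 s0 t)) (snd (SE d 0 a0 s0 t))
            <= ((1 + e) * lam) ^ t * lyap (lam * d) a0 s0.
Proof.
  intros He Hr Hr_basin Hrho Hs0 HV0.
  assert (HV0_pos : 0 <= lyap (lam * d) a0 s0).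
  { unfold lyap. pose proof (pow2_ge_0 (1 - a0)).
    assert (0 <= lam * d * s0) by (apply Rmult_le_pos; nra). lra. }
  induction t as [|t IHt]; [simpl; lra|].
  pose proof (SE_snd_nonneg d a0 s0 t d_pos Hs0) as Hs.
  cbn [SE]. destruct (SE d 0 a0 s0 t) as [a s]. cbn [fst snd] in *.
  assert (Hrt : ((1 + e) * lam) ^ t <= 1).
  { pose proof (pow_incr ((1 + e) * lam) 1 t ltac:(nra)) as Hpow. now rewrite pow1 in Hpow. }
  assert (Ha : 1 - r <= a).
  { assert (((1 + e) * lam) ^ t * lyap (lam * d) a0 s0 <= lyap (lam * d) a0 s0).
    { rewrite <- (Rmult_1_l (lyap _ a0 s0)) at 2. apply Rmult_le_compat_r; lra. }
    unfold lyap in *. assert (0 <= lam * d * s) by (apply Rmult_le_pos; nra).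
    assert ((1 - a) ^ 2 <= r ^ 2) by lra. nra. }
  assert (Hae : 1 <= (1 + e) * a ^ 2).
  { apply Rle_trans with ((1 + e) * (1 - r) ^ 2); [exact Hr_basin|].
    apply Rmult_le_compat_l; [lra|]. apply pow_incr; lra. }
  apply Rle_trans with ((1 + e) * lam * lyap (lam * d) a s).
  - apply lyap_step_le; lra.
  - rewrite <- tech_pow_Rmult, (Rmult_assoc ((1 + e) * lam)).
    apply Rmult_le_compat_l; nra.
Qed.

End Lyapunov.

Lemma Un_cv_geometric_bound (u : nat -> R) (l C r : R) : 0 <= r < 1 ->
  (forall t, Rabs (u t - l) <= C * r ^ t) -> Un_cv u l.
Proof.
  intros Hr Hu eps Heps.
  destruct (pow_lt_1_zero r ltac:(rewrite Rabs_right; lra) (eps / (Rabs C + 1)))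
    as [N HN]; [apply Rdiv_lt_0_compat; pose proof (Rabs_pos C); lra|].
  exists N. intros n Hn. specialize (HN n Hn). unfold Rdist.
  rewrite Rabs_right in HN by (apply Rle_ge, pow_le; lra).
  assert (Hrn : 0 <= r ^ n) by (apply pow_le; lra).
  assert (r ^ n * (Rabs C + 1) < eps).
  { apply Rmult_lt_reg_r with (/ (Rabs C + 1)); [apply Rinv_0_lt_compat; pose proof (Rabs_pos C); lra|].
    replace (r ^ n * (Rabs C + 1) * / (Rabs C + 1)) with (r ^ n)
      by (field; pose proof (Rabs_pos C); lra).
    exact HN. }
  pose proof (Hu n). pose proof (Rle_abs C). nra.
Qed.

Lemma bounded_geometric_growth_nonpos (v : nat -> R) (rho B : R) (N : nat) : 1 < rho ->
  (forall n, (N <= n)%nat -> rho * v n <= v (S n)) ->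
  (forall n, (N <= n)%nat -> v n <= B) -> v N <= 0.
Proof.
  intros Hrho Hgrow Hbound.
  assert (Hiter : forall j, rho ^ j * v N <= v (N + j)%nat).
  { induction j as [|j IHj].
    - rewrite Nat.add_0_r. simpl. lra.
    - rewrite Nat.add_succ_r. simpl.
      apply Rle_trans with (rho * v (N + j)%nat); [|apply Hgrow; lia].
      rewrite Rmult_assoc. apply Rmult_le_compat_l; lra. }
  destruct (Rle_or_lt (v N) 0) as [|HvN]; [assumption|exfalso].
  destruct (Pow_x_infinity rho ltac:(rewrite Rabs_right; lra) ((Rabs B + 1) / v N))
    as [j Hj].
  specialize (Hj j (le_n j)). rewrite Rabs_right in Hj by (apply Rle_ge, pow_le; lra).
  assert (rho ^ j * v N >= Rabs B + 1).
  { replace (Rabs B + 1) with ((Rabs B + 1) / v N * v N) by (field; lra).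
    apply Rle_ge, Rmult_le_compat_r; lra. }
  pose proof (Hiter j). pose proof (Hbound (N + j)%nat ltac:(lia)).
  pose proof (Rle_abs B). lra.
Qed.

Lemma Un_cv_of_lyap_decay (c rho V0 : R) (a s : nat -> R) : 0 < c -> 0 <= rho < 1 ->
  (forall t, 0 <= s t) -> (forall t, lyap c (a t) (s t) <= rho ^ t * V0) ->
  Un_cv a 1 /\ Un_cv s 0.
Proof.
  intros Hc Hrho Hs Hdecay.
  assert (HV0 : 0 <= V0).
  { pose proof (Hdecay 0%nat) as H0. unfold lyap in H0. simpl in H0.
    pose proof (pow2_ge_0 (1 - a 0%nat)). pose proof (Hs 0%nat). nra. }
  split.
  - apply (Un_cv_geometric_bound a 1 (sqrt V0) (sqrt rho)).
    + split; [apply sqrt_pos|]. rewrite <- sqrt_1. apply sqrt_lt_1_alt. lra.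
    + intros t. pose proof (Hdecay t) as Ht. unfold lyap in Ht.
      assert (Hsq : rho ^ t * V0 = (sqrt V0 * sqrt rho ^ t) ^ 2).
      { rewrite Rpow_mult_distr, pow2_sqrt by lra.
        rewrite <- pow_mult, Nat.mul_comm, pow_mult, pow2_sqrt by lra. ring. }
      assert (0 <= sqrt V0 * sqrt rho ^ t)
        by (apply Rmult_le_pos; [apply sqrt_pos|apply pow_le, sqrt_pos]).
      rewrite <- (Rabs_right (sqrt V0 * _)) by lra.
      apply Rsqr_le_abs_0. unfold Rsqr.
      pose proof (Hs t). assert (0 <= c * s t) by nra. nra.
  - apply (Un_cv_geometric_bound s 0 (V0 / c) rho); [lra|].
    intros t. pose proof (Hdecay t) as Ht. unfold lyap in Ht.
    rewrite Rminus_0_r, Rabs_right by (apply Rle_ge, Hs).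
    apply Rmult_le_reg_l with c; [lra|].
    replace (c * (V0 / c * rho ^ t)) with (rho ^ t * V0) by (field; lra).
    pose proof (pow2_ge_0 (1 - a t)). lra.
Qed.

Lemma SE_local_convergence (d : R) : d > delta_global ->
  exists eps1 eps2 : R, 0 < eps1 /\ 0 < eps2 /\
    forall alpha0 s0 : R, 1 - eps1 < alpha0 < 1 -> 0 < s0 < eps2 ->
      Un_cv (fun t => fst (SE d 0 alpha0 s0 t)) 1 /\
      Un_cv (fun t => snd (SE d 0 alpha0 s0 t)) 0.
Proof.
  intros Hdg. pose proof PI_gt_3.
  assert (Hd : 0 < d).
  { unfold delta_global in Hdg. assert (0 < 4 / PI ^ 2) by (apply Rdiv_lt_0_compat; nra). lra. }
  destruct (lyapunov_rate_exists d Hd) as [lam [Hlam [Hroot [Hlt _]]]].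
  specialize (Hlt Hdg).
  set (e := (1 - lam) / (2 * lam)).
  assert (He : 0 < e) by (apply Rdiv_lt_0_compat; lra).
  assert (Hrho : (1 + e) * lam = (1 + lam) / 2) by (unfold e; field; lra).
  (* (1 + e) (1 - r)^2 >= (1 + e) (1 - 2 r) = 1 *)
  set (r := e / (2 * (1 + e))).
  assert (Hr : 0 < r < 1).
  { unfold r. split; [apply Rdiv_lt_0_compat; lra|].
    apply Rmult_lt_reg_r with (2 * (1 + e)); [lra|].
    unfold Rdiv; rewrite Rmult_assoc, Rinv_l; lra. }
  assert (Hr_basin : 1 <= (1 + e) * (1 - r) ^ 2).
  { replace 1 with ((1 + e) * (1 - 2 * r)) at 1 by (unfold r; field; lra). nra. }
  assert (Hc : 0 < lam * d) by nra.
  exists (r / 2), (r ^ 2 / (2 * (lam * d))).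
  split; [lra|]. split; [apply Rdiv_lt_0_compat; nra|].
  intros a0 s0 Ha0 Hs0.
  assert (HV0 : lyap (lam * d) a0 s0 <= r ^ 2).
  { unfold lyap. assert (lam * d * s0 < r ^ 2 / 2).
    { replace (r ^ 2 / 2) with (lam * d * (r ^ 2 / (2 * (lam * d)))) by (field; lra).
      apply Rmult_lt_compat_l; lra. }
    nra. }
  apply (Un_cv_of_lyap_decay (lam * d) ((1 + e) * lam) (lyap (lam * d) a0 s0)); [lra|lra| |].
  - intros t. apply SE_snd_nonneg; lra.
  - apply (SE_lyap_decay d lam Hd Hlam Hroot e r); lra.
Qed.

Lemma Un_cv_eventually_near (a s : nat -> R) (l eta : R) : 0 < eta -> (forall n, 0 <= s n) ->
  Un_cv a l -> Un_cv s 0 ->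
  exists N, forall n, (N <= n)%nat -> Rabs (a n - l) < eta /\ sqrt (s n) < eta.
Proof.
  intros Heta Hs Ha Hcs.
  destruct (Ha eta Heta) as [N1 HN1].
  destruct (Hcs (eta ^ 2) ltac:(nra)) as [N2 HN2].
  exists (Nat.max N1 N2). intros n Hn. split; [apply HN1; lia|].
  specialize (HN2 n ltac:(lia)). unfold Rdist in HN2.
  rewrite Rminus_0_r, Rabs_right in HN2 by (apply Rle_ge, Hs).
  rewrite <- (sqrt_pow2 eta) by lra. apply sqrt_lt_1_alt. split; [apply Hs|exact HN2].
Qed.

Lemma SE_no_convergence_below (d : R) : 0 < d -> d < delta_global ->
  forall alpha0 s0 : R, 0 <= s0 ->
    Un_cv (fun t => fst (SE d 0 alpha0 s0 t)) 1 ->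
    Un_cv (fun t => snd (SE d 0 alpha0 s0 t)) 0 ->
    alpha0 = 1 /\ s0 = 0.
Proof.
  intros Hd Hdg a0 s0 Hs0 Hca Hcs.
  destruct (lyapunov_rate_exists d Hd) as [lam [Hlam [Hroot [_ Hgt]]]].
  specialize (Hgt Hdg).
  set (e := (lam - 1) / (2 * lam)).
  assert (He : 0 < e < 1 / 2).
  { unfold e. split; [apply Rdiv_lt_0_compat; lra|].
    apply Rmult_lt_reg_r with (2 * lam); [lra|].
    unfold Rdiv; rewrite Rmult_assoc, Rinv_l; lra. }
  assert (Hrho : (1 - e) * lam = (1 + lam) / 2) by (unfold e; field; lra).
  assert (Hc : 0 < lam * d) by nra.
  set (a := fun t => fst (SE d 0 a0 s0 t)) in Hca.
  set (s := fun t => snd (SE d 0 a0 s0 t)) in Hcs.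
  assert (Hs : forall t, 0 <= s t) by (intros; apply SE_snd_nonneg; lra).
  destruct (Un_cv_eventually_near a s 1 (e / 16) ltac:(lra) Hs Hca Hcs) as [N Hnear].
  assert (HVN : lyap (lam * d) (a N) (s N) <= 0).
  { apply (bounded_geometric_growth_nonpos (fun n => lyap (lam * d) (a n) (s n))
             ((1 - e) * lam) (1 + lam * d)); [lra| |].
    - intros n Hn. destruct (Hnear n Hn) as [Ha Hsqrt]. apply Rabs_def2 in Ha.
      apply (lyap_step_ge d lam Hd Hlam Hroot e (a n) (s n)); [lra|lra|apply Hs|lra].
    - intros n Hn. destruct (Hnear n Hn) as [Ha Hsqrt]. apply Rabs_def2 in Ha.
      rewrite <- (pow2_sqrt (s n)) by apply Hs. unfold lyap.
      assert (sqrt (s n) ^ 2 <= 1) by (pose proof (sqrt_pos (s n)); nra).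
      assert (lam * d * sqrt (s n) ^ 2 <= lam * d * 1) by (apply Rmult_le_compat_l; lra).
      nra. }
  apply (SE_eq_fixed_point d a0 s0 N Hd Hs0).
  unfold lyap in HVN. pose proof (Hs N). pose proof (pow2_ge_0 (1 - a N)).
  assert (Hs_N : s N = 0) by nra.
  assert (Ha_N : a N = 1) by nra.
  unfold a, s in Ha_N, Hs_N. destruct (SE d 0 a0 s0 N). simpl in *. now subst.
Qed.

Theorem mainTheorem5 :
  (forall delta : R, 0 < delta ->
     psi1 1 0 = 1 /\ psi2 1 0 delta 0 = 0) /\
  (forall delta : R, delta > delta_global ->
     exists eps1 eps2 : R, 0 < eps1 /\ 0 < eps2 /\
       forall alpha0 s0 : R,
         1 - eps1 < alpha0 < 1 -> 0 < s0 < eps2 ->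
         Un_cv (fun t => fst (SE delta 0 alpha0 s0 t)) 1 /\
         Un_cv (fun t => snd (SE delta 0 alpha0 s0 t)) 0) /\
  (forall delta : R, 0 < delta -> delta < delta_global ->
     forall alpha0 s0 : R, 0 <= s0 -> (alpha0, s0) <> (0, 0) ->
       Un_cv (fun t => fst (SE delta 0 alpha0 s0 t)) 1 ->
       Un_cv (fun t => snd (SE delta 0 alpha0 s0 t)) 0 ->
       alpha0 = 1 /\ s0 = 0).
Proof.
  split; [|split].
  - intros delta _. exact (psi_fixed_point delta).
  - exact SE_local_convergence.
  - intros delta Hd Hdg alpha0 s0 Hs0 _.
    exact (SE_no_convergence_below delta Hd Hdg alpha0 s0 Hs0).
Qed.
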